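(* Let $I=[s,t]\subseteq\mathbb R/\mathbb Z$ be a generalized dyadic interval. Then: (1) there is a decomposition $I=[s,x]\cup[x,t]$ into two generalized dyadic intervals with $x$ red; (2) if at least one of $s,t$ is red, there is a decomposition $I=[s,x]\cup[x,t]$ into two generalized dyadic intervals with $x$ blue.
   Context: Let $\sigma_2(t)=2t$ on $\mathbb R/\mathbb Z$. An interval $I=[s,t]\subseteq\mathbb R/\mathbb Z$ is generalized dyadic if there is an integer $m\ge0$ such that $\sigma_2^m$ maps the open interval $(s,t)$ homeomorphically onto one of $(0,1)$, $(0,\frac23)$, $(\frac13,\frac23)$, $(\frac13,1)$. A point of $\mathbb R/\mathbb Z$ is colored red if some iterate of $\sigma_2$ maps it to $0$, and blue if some iterate maps it into the $2$-cycle $\{\frac13,\frac23\}$; endpoints of generalized dyadic intervals are red or blue. *)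

From Stdlib Require Import Reals.
Open Scope R_scope.

(* R/Z is modelled by the set of representatives [0,1);
   circ x is the class of the real x (x - floor x). *)
Definition circ (x : R) : R := x - IZR (Int_part x).

Definition sigma2 (p : R) : R := circ (2 * p).

(* An interval [s,t] of R/Z is given by real lifts s < t <= s + 1;
   its endpoints are circ s, circ t and its interior is the open arc
   oarc s t = image in R/Z of the real open interval (s,t). *)
Definition is_interval (s t : R) : Prop := s < t <= s + 1.

Definition oarc (s t : R) (p : R) : Prop :=
  exists y : R, s < y < t /\ p = circ y.

(* sigma_2^m maps the open arc (s,t) homeomorphically (for this
   continuous map, bijectively) onto the open arc (a,b). *)
Definition maps_onto (m : nat) (s t a b : R) : Prop :=
  (forall p q, oarc s t p -> oarc s t q ->
     Nat.iter m sigma2 p = Nat.iter m sigma2 q -> p = q) /\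
  (forall r, oarc a b r <-> exists p, oarc s t p /\ Nat.iter m sigma2 p = r).

Definition gen_dyadic (s t : R) : Prop :=
  is_interval s t /\
  exists m : nat,
    maps_onto m s t 0 1 \/ maps_onto m s t 0 (2/3) \/
    maps_onto m s t (1/3) (2/3) \/ maps_onto m s t (1/3) 1.

Definition red (x : R) : Prop :=
  exists n : nat, Nat.iter n sigma2 (circ x) = 0.

Definition blue (x : R) : Prop :=
  exists n : nat, Nat.iter n sigma2 (circ x) = 1/3 \/
                  Nat.iter n sigma2 (circ x) = 2/3.

(* A generalized dyadic interval [s,t] is one that an affine map
   y |-> 2^m y - k carries onto one of the basic arcs [0,1], [0,2/3],
   [1/3,2/3], [1/3,1]: injectivity of sigma_2^m forces 2^m (t - s) <= 1,
   and an arc of length at most 1 determines its endpoints modulo 1.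
   Every basic arc splits at 1/2 into two generalized dyadic pieces, and
   every basic arc except [1/3,2/3] also splits at 1/3 or 2/3; pulling
   these points back gives a red and a blue splitting point.  The arc
   [1/3,2/3] does not occur in (2) because its endpoints pull back to
   points that are not red: red points are the dyadic rationals, and
   2^n (r/3 + k) is never an integer for r = 1, 2. *)
From Stdlib Require Import Reals Lra Lia ZArith Znumtheory.
Open Scope R_scope.

Lemma circ_plus_int x k : circ (x + IZR k) = circ x.
Proof.
  unfold circ.
  destruct (base_Int_part x) as [B1 B2].
  rewrite <- (Int_part_spec (x + IZR k) (Int_part x + k)); rewrite plus_IZR; [ring | lra].
Qed.

Lemma circ_eq_iff x y : circ x = circ y <-> exists k, x = y + IZR k.
Proof.
  split.
  - unfold circ. intros E. exists (Int_part x - Int_part y)%Z. rewrite minus_IZR. lra.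
  - intros [k ->]. apply circ_plus_int.
Qed.

Lemma circ_id c : 0 <= c < 1 -> circ c = c.
Proof. intros H. unfold circ. rewrite <- (Int_part_spec c 0); simpl; lra. Qed.

Lemma circ_IZR j : circ (IZR j) = 0.
Proof. rewrite <- (Rplus_0_l (IZR j)), circ_plus_int. apply circ_id. lra. Qed.

Lemma iter_sigma2_circ m y : Nat.iter m sigma2 (circ y) = circ (2 ^ m * y).
Proof.
  induction m as [|m IH]; simpl.
  - f_equal. ring.
  - rewrite IH. unfold sigma2. apply circ_eq_iff.
    exists (- (2 * Int_part (2 ^ m * y)))%Z. rewrite opp_IZR, mult_IZR. unfold circ. ring.
Qed.

Lemma oarc_circ a b y : oarc a b (circ y) <-> exists k, a < y + IZR k < b.
Proof.
  split.
  - intros [z [Hz E]]. apply circ_eq_iff in E as [k E].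
    exists (- k)%Z. rewrite opp_IZR. lra.
  - intros [k Hk]. exists (y + IZR k). split; [exact Hk | symmetry; apply circ_plus_int].
Qed.

Lemma oarc_shift a b k r : oarc (a + IZR k) (b + IZR k) r <-> oarc a b r.
Proof.
  split; intros [y [Hy ->]].
  - exists (y - IZR k). split; [lra|].
    rewrite <- (circ_plus_int (y - IZR k) k). f_equal. ring.
  - exists (y + IZR k). split; [lra | symmetry; apply circ_plus_int].
Qed.

Lemma oarc_opp a b y : oarc a b (circ y) <-> oarc (- b) (- a) (circ (- y)).
Proof.
  rewrite !oarc_circ.
  split; intros [k Hk]; exists (- k)%Z; rewrite opp_IZR; lra.
Qed.

Lemma not_oarc_gap a b w : a < b -> b <= w <= a + 1 -> ~ oarc a b (circ w).
Proof.
  intros Hab Hw. rewrite oarc_circ. intros [k Hk].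
  assert (Hk1 : (-1 < k)%Z) by (apply lt_IZR; lra).
  assert (Hk2 : (k < 0)%Z) by (apply lt_IZR; lra).
  lia.
Qed.

Lemma oarc_left_endpoint a b q v : a < b <= a + 1 -> q < v ->
  ~ oarc a b (circ q) -> (forall y, q < y < v -> oarc a b (circ y)) ->
  exists k, q = a + IZR k.
Proof.
  intros Hab Hqv Hq Hright.
  destruct (base_Int_part (q - a)) as [B1 B2].
  set (n := Int_part (q - a)) in *.
  destruct (Req_dec q (a + IZR n)) as [E|E]; [now exists n|].
  exfalso. destruct (Rlt_or_le q (b + IZR n)) as [Hin|Hout].
  - apply Hq, oarc_circ. exists (- n)%Z. rewrite opp_IZR. lra.
  - set (e := Rmin (v - q) (a + IZR n + 1 - q) / 2).
    assert (e1 : Rmin (v - q) (a + IZR n + 1 - q) <= v - q) by apply Rmin_l.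
    assert (e2 : Rmin (v - q) (a + IZR n + 1 - q) <= a + IZR n + 1 - q) by apply Rmin_r.
    assert (e3 : 0 < Rmin (v - q) (a + IZR n + 1 - q)) by (apply Rmin_glb_lt; lra).
    apply (not_oarc_gap a b (q + e - IZR n)); [lra | unfold e; lra |].
    rewrite <- (circ_plus_int _ n). replace (q + e - IZR n + IZR n) with (q + e) by ring.
    apply Hright. unfold e; lra.
Qed.

Lemma oarc_right_endpoint a b u q : a < b <= a + 1 -> u < q ->
  ~ oarc a b (circ q) -> (forall y, u < y < q -> oarc a b (circ y)) ->
  exists k, q = b + IZR k.
Proof.
  intros Hab Huq Hq Hleft.
  destruct (oarc_left_endpoint (- b) (- a) (- q) (- u)) as [k Hk]; [lra | lra | | |].
  - rewrite <- oarc_opp. exact Hq.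
  - intros y Hy. rewrite <- (Ropp_involutive y), <- oarc_opp. apply Hleft. lra.
  - exists (- k)%Z. rewrite opp_IZR. lra.
Qed.

Lemma oarc_endpoints a b u v : a < b <= a + 1 -> u < v <= u + 1 ->
  (forall r, oarc a b r <-> oarc u v r) ->
  exists k, u = a + IZR k /\ v = b + IZR k.
Proof.
  intros Hab Huv Heq.
  assert (Hin : forall y, u < y < v -> oarc a b (circ y)).
  { intros y Hy. apply Heq. exists y. split; [exact Hy | reflexivity]. }
  destruct (oarc_left_endpoint a b u v) as [k1 Hk1]; [lra | lra | | exact Hin |].
  { rewrite Heq, <- (circ_plus_int u 1). apply not_oarc_gap; simpl; lra. }
  destruct (oarc_right_endpoint a b u v) as [k2 Hk2]; [lra | lra | | exact Hin |].
  { rewrite Heq. apply not_oarc_gap; lra. }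
  assert (Hk : (k2 - k1)%Z = 0%Z) by (apply one_IZR_lt1; rewrite minus_IZR; lra).
  exists k1. split; [exact Hk1|].
  replace k1 with k2 by lia. exact Hk2.
Qed.

Lemma image_iter_sigma2_oarc m s t r :
  (exists p, oarc s t p /\ Nat.iter m sigma2 p = r) <-> oarc (2 ^ m * s) (2 ^ m * t) r.
Proof.
  assert (HL : 0 < 2 ^ m) by (apply pow_lt; lra).
  split.
  - intros [p [[y [Hy ->]] <-]]. rewrite iter_sigma2_circ. exists (2 ^ m * y).
    split; [split; apply Rmult_lt_compat_l; lra | reflexivity].
  - intros [z [Hz ->]]. exists (circ (z / 2 ^ m)).
    assert (Ez : 2 ^ m * (z / 2 ^ m) = z) by (field; lra).
    split.
    + exists (z / 2 ^ m). split; [|reflexivity].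
      split; apply (Rmult_lt_reg_l (2 ^ m)); lra.
    + rewrite iter_sigma2_circ, Ez. reflexivity.
Qed.

Lemma iter_sigma2_inj_oarc m s t : 2 ^ m * (t - s) <= 1 ->
  forall p q, oarc s t p -> oarc s t q ->
  Nat.iter m sigma2 p = Nat.iter m sigma2 q -> p = q.
Proof.
  intros Hlen p q [y1 [Hy1 ->]] [y2 [Hy2 ->]].
  rewrite !iter_sigma2_circ, circ_eq_iff. intros [k Hk].
  assert (HL : 0 < 2 ^ m) by (apply pow_lt; lra).
  assert (H1 : 2 ^ m * s < 2 ^ m * y1 < 2 ^ m * t) by (split; apply Rmult_lt_compat_l; lra).
  assert (H2 : 2 ^ m * s < 2 ^ m * y2 < 2 ^ m * t) by (split; apply Rmult_lt_compat_l; lra).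
  assert (k = 0%Z) by (apply one_IZR_lt1; lra). subst k.
  f_equal. apply (Rmult_eq_reg_l (2 ^ m)); lra.
Qed.

(* Otherwise y and y + 2^-m, both in (s,t), have the same image; for m = 0
   the hypothesis t <= s + 1 is what is needed. *)
Lemma iter_sigma2_inj_oarc_length m s t : s < t <= s + 1 ->
  (forall p q, oarc s t p -> oarc s t q ->
     Nat.iter m sigma2 p = Nat.iter m sigma2 q -> p = q) ->
  2 ^ m * (t - s) <= 1.
Proof.
  intros Hst Hinj.
  destruct m as [|m]; [simpl; lra|].
  destruct (Rle_or_lt (2 ^ S m * (t - s)) 1) as [Hle|Hgt]; [exact Hle|].
  exfalso. set (L := 2 ^ S m) in *.
  assert (L2 : 2 <= L) by (unfold L; simpl; pose proof (pow_R1_Rle 2 m); lra).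
  set (e := / L).
  assert (Le : L * e = 1) by (unfold e; field; lra).
  assert (e0 : 0 < e) by (unfold e; apply Rinv_0_lt_compat; lra).
  assert (e1 : e <= 1 / 2) by nra.
  assert (Hte : e < t - s) by nra.
  set (y := s + (t - s - e) / 2).
  assert (E : circ y = circ (y + e)).
  { apply Hinj.
    - exists y. split; [unfold y; lra | reflexivity].
    - exists (y + e). split; [unfold y; lra | reflexivity].
    - rewrite !iter_sigma2_circ. apply circ_eq_iff. exists (-1)%Z. fold L. lra. }
  apply circ_eq_iff in E as [k Hk].
  assert (k = 0%Z) by (apply one_IZR_lt1; lra). subst k. simpl in Hk. lra.
Qed.

Lemma maps_onto_iff m s t a b : s < t <= s + 1 ->
  maps_onto m s t a b <->
  2 ^ m * (t - s) <= 1 /\ (forall r, oarc a b r <-> oarc (2 ^ m * s) (2 ^ m * t) r).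
Proof.
  intros Hst. unfold maps_onto.
  setoid_rewrite image_iter_sigma2_oarc.
  split; intros [H1 H2]; split; try exact H2.
  - exact (iter_sigma2_inj_oarc_length m s t Hst H1).
  - exact (iter_sigma2_inj_oarc m s t H1).
Qed.

Lemma maps_onto_iff_shift m s t a b : s < t <= s + 1 -> a < b <= a + 1 ->
  maps_onto m s t a b <-> exists k, 2 ^ m * s = a + IZR k /\ 2 ^ m * t = b + IZR k.
Proof.
  intros Hst Hab. rewrite maps_onto_iff by exact Hst.
  assert (HL : 0 < 2 ^ m) by (apply pow_lt; lra).
  assert (Hmst : 2 ^ m * s < 2 ^ m * t) by (apply Rmult_lt_compat_l; lra).
  split.
  - intros [Hlen Heq]. apply oarc_endpoints; [exact Hab | lra | exact Heq].
  - intros [k [Hs Ht]]. split; [lra|].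
    intros r. rewrite Hs, Ht, oarc_shift. reflexivity.
Qed.

Definition basic_arc (a b : R) : Prop :=
  (a = 0 /\ b = 1) \/ (a = 0 /\ b = 2/3) \/ (a = 1/3 /\ b = 2/3) \/ (a = 1/3 /\ b = 1).

Definition dyadic_lift (s t : R) : Prop :=
  exists m k a b, basic_arc a b /\ 2 ^ m * s = a + IZR k /\ 2 ^ m * t = b + IZR k.

Lemma gen_dyadic_iff_lift s t : gen_dyadic s t <-> dyadic_lift s t.
Proof.
  split.
  - intros [Hst [m Hm]].
    assert (G : forall a b, basic_arc a b -> maps_onto m s t a b -> dyadic_lift s t).
    { intros a b Hab M.
      apply maps_onto_iff_shift in M as [k [Hs Ht]]; [| exact Hst | unfold basic_arc in Hab; lra].
      exists m, k, a, b. auto. }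
    unfold basic_arc in G.
    destruct Hm as [M|[M|[M|M]]]; eapply G; try exact M; lra.
  - intros (m & k & a & b & Hab & Hs & Ht).
    assert (Hba : 0 < b - a <= 1) by (unfold basic_arc in Hab; lra).
    assert (H1 : 1 <= 2 ^ m) by (apply pow_R1_Rle; lra).
    assert (Hst : s < t <= s + 1) by nra.
    split; [exact Hst|]. exists m.
    assert (M : forall a' b', a' = a -> b' = b -> maps_onto m s t a' b').
    { intros a' b' -> ->. apply maps_onto_iff_shift; [exact Hst | lra | eauto]. }
    unfold basic_arc in Hab.
    destruct Hab as [[-> ->]|[[-> ->]|[[-> ->]|[-> ->]]]]; auto 6.
Qed.

Lemma dyadic_lift_rescale m k a c s x : dyadic_lift a c ->
  2 ^ m * s = a + IZR k -> 2 ^ m * x = c + IZR k -> dyadic_lift s x.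
Proof.
  intros (n & j & a' & c' & Hb & Ha & Hc) Hs Hx.
  exists (m + n)%nat, (j + 2 ^ Z.of_nat n * k)%Z, a', c'.
  rewrite pow_add, plus_IZR, mult_IZR, <- (pow_IZR 2 n).
  split; [exact Hb | split; nra].
Qed.

Lemma split_lift m k a b c s t :
  2 ^ m * s = a + IZR k -> 2 ^ m * t = b + IZR k -> a < c < b ->
  dyadic_lift a c -> dyadic_lift c b ->
  exists x, s < x < t /\ gen_dyadic s x /\ gen_dyadic x t /\ 2 ^ m * x = c + IZR k.
Proof.
  intros Hs Ht Hc Hac Hcb.
  assert (HL : 0 < 2 ^ m) by (apply pow_lt; lra).
  set (x := (c + IZR k) / 2 ^ m).
  assert (Hx : 2 ^ m * x = c + IZR k) by (unfold x; field; lra).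
  exists x. rewrite !gen_dyadic_iff_lift. repeat split.
  - apply (Rmult_lt_reg_l (2 ^ m)); lra.
  - apply (Rmult_lt_reg_l (2 ^ m)); lra.
  - exact (dyadic_lift_rescale m k a c s x Hac Hs Hx).
  - exact (dyadic_lift_rescale m k c b x t Hcb Hx Ht).
  - exact Hx.
Qed.

Ltac dyadic_lift_by m k a b :=
  exists m, k, a, b; split; [unfold basic_arc; lra | simpl; split; lra].

Lemma basic_arc_split_half a b : basic_arc a b ->
  a < 1/2 < b /\ dyadic_lift a (1/2) /\ dyadic_lift (1/2) b.
Proof.
  assert (L0 : dyadic_lift 0 (1/2)) by dyadic_lift_by 1%nat 0%Z 0 1.
  assert (L1 : dyadic_lift (1/3) (1/2)) by dyadic_lift_by 2%nat 1%Z (1/3) 1.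
  assert (R1 : dyadic_lift (1/2) 1) by dyadic_lift_by 1%nat 1%Z 0 1.
  assert (R2 : dyadic_lift (1/2) (2/3)) by dyadic_lift_by 2%nat 2%Z 0 (2/3).
  intros [[-> ->]|[[-> ->]|[[-> ->]|[-> ->]]]]; repeat split; auto; lra.
Qed.

Definition third (c : R) : Prop := c = 1/3 \/ c = 2/3.

Lemma basic_arc_split_third a b : basic_arc a b ->
  (a = 1/3 /\ b = 2/3) \/
  exists c, third c /\ a < c < b /\ dyadic_lift a c /\ dyadic_lift c b.
Proof.
  assert (L0 : dyadic_lift 0 (1/3)) by dyadic_lift_by 1%nat 0%Z 0 (2/3).
  assert (L1 : dyadic_lift (1/3) (2/3)) by dyadic_lift_by 0%nat 0%Z (1/3) (2/3).
  assert (R1 : dyadic_lift (1/3) 1) by dyadic_lift_by 0%nat 0%Z (1/3) 1.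
  assert (R2 : dyadic_lift (2/3) 1) by dyadic_lift_by 1%nat 1%Z (1/3) 1.
  unfold third.
  intros [[-> ->]|[[-> ->]|[[-> ->]|[-> ->]]]];
    [right; exists (1/3) | right; exists (1/3) | left | right; exists (2/3)];
    repeat split; auto; lra.
Qed.

Lemma red_iff x : red x <-> exists n j, 2 ^ n * x = IZR j.
Proof.
  unfold red. setoid_rewrite iter_sigma2_circ.
  split; intros [n Hn]; exists n.
  - exists (Int_part (2 ^ n * x)). unfold circ in Hn. lra.
  - destruct Hn as [j ->]. apply circ_IZR.
Qed.

Lemma red_of_half m k x : 2 ^ m * x = 1/2 + IZR k -> red x.
Proof.
  intros Hx. apply red_iff. exists (S m), (2 * k + 1)%Z.
  rewrite plus_IZR, mult_IZR. simpl. lra.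
Qed.

Lemma blue_of_third m k c x : third c -> 2 ^ m * x = c + IZR k -> blue x.
Proof.
  intros Hc Hx. exists m.
  rewrite iter_sigma2_circ, Hx, circ_plus_int, circ_id by (unfold third in Hc; lra).
  exact Hc.
Qed.

Lemma third_not_red m k c x : third c -> 2 ^ m * x = c + IZR k -> ~ red x.
Proof.
  intros Hc Hx Hred. apply red_iff in Hred as [n [j Hj]].
  assert (Hr : exists r, (r = 1 \/ r = 2)%Z /\ 3 * c = IZR r)
    by (unfold third in Hc; destruct Hc; [exists 1%Z | exists 2%Z]; split; lia || lra).
  destruct Hr as [r [Hr Hcr]].
  assert (E : IZR (3 * (2 ^ Z.of_nat m * j)) = IZR (2 ^ Z.of_nat n * (r + 3 * k))).
  { rewrite !mult_IZR, plus_IZR, mult_IZR, <- !(pow_IZR 2), <- Hj, <- Hcr.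
    replace (2 ^ m * (2 ^ n * x)) with (2 ^ n * (2 ^ m * x)) by ring.
    rewrite Hx. simpl. ring. }
  apply eq_IZR in E.
  assert (Hdiv : (3 | r + 3 * k)%Z).
  { apply (Z.gauss _ (2 ^ Z.of_nat n)).
    - exists (2 ^ Z.of_nat m * j)%Z. lia.
    - apply Zgcd_1_rel_prime, Zpow_facts.rel_prime_Zpower_r; [lia|].
      apply Zgcd_1_rel_prime. reflexivity. }
  destruct Hdiv as [q Hq]. lia.
Qed.

Theorem lemma7p2 (s t : R) :
  gen_dyadic s t ->
  (exists x : R, s < x < t /\ gen_dyadic s x /\ gen_dyadic x t /\ red x) /\
  ((red s \/ red t) ->
   exists x : R, s < x < t /\ gen_dyadic s x /\ gen_dyadic x t /\ blue x).
Proof.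
  intros Hst. apply gen_dyadic_iff_lift in Hst as (m & k & a & b & Hab & Hs & Ht).
  split.
  - destruct (basic_arc_split_half a b Hab) as (Hc & Hac & Hcb).
    destruct (split_lift m k a b (1/2) s t) as (x & Hx & Hsx & Hxt & Ex); auto.
    exists x. do 3 (split; [assumption|]). exact (red_of_half m k x Ex).
  - intros Hred.
    destruct (basic_arc_split_third a b Hab) as [[-> ->] | (c & Hc & Hac & Hl & Hr)].
    + exfalso. destruct Hred as [Hred | Hred]; revert Hred.
      * apply (third_not_red m k (1/3)); [left | rewrite Hs]; lra.
      * apply (third_not_red m k (2/3)); [right | rewrite Ht]; lra.
    + destruct (split_lift m k a b c s t) as (x & Hx & Hsx & Hxt & Ex); auto.
      exists x. do 3 (split; [assumption|]). exact (blue_of_third m k c x Hc Ex).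
Qed.
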